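(* Let $n\ge1$, let $a_1,\dots,a_n$ be integers, and let $Q$ be a subset of $E=\{(i,j)\mid 1\le i<j\le n\}$. Let $E\overline{Q}$ be the tournament on $\{1,\dots,n\}$ containing $(i,j)$ for each $(i,j)\in E\setminus Q$ and $(j,i)$ for each $(i,j)\in Q$. Put $$A=\prod_{(i,j)\in Q}\frac{x_j}{x_i},\qquad B=\prod_{1\le i<j\le n}\Big(1-\frac{q^{a_j}x_j}{x_i}\Big).$$ Let $1\le r_1<r_2<\cdots<r_s\le n$, $R=\{r_1,\dots,r_s\}$, let $k_1,\dots,k_s$ be integers, and let $E_{\mathbf r,\mathbf k}$ denote the operation on rational functions of replacing $x_{r_i}$ by $x_{r_s}q^{k_s-k_i}$ for $i=1,\dots,s-1$. Then the degree in $x_{r_s}$ of the rational function $E_{\mathbf r,\mathbf k}(A/B)$ is $0$ if and only if $(r,m)\in E\overline{Q}$ for every $r\in R$ and every $m\in\{1,\dots,n\}\setminus R$; otherwise this degree is negative.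
   Context: $q$ is an indeterminate. The degree in $x$ of a rational function of $x$ is the degree in $x$ of its numerator minus the degree in $x$ of its denominator. *)

From HB Require Import structures.
From mathcomp Require Import all_boot all_order all_algebra.
From mathcomp Require Import fraction.
From mathcomp Require Import mpoly.
Set Implicit Arguments. Unset Strict Implicit. Unset Printing Implicit Defensive.
Import Order.TTheory GRing.Theory Num.Theory.
Local Open Scope ring_scope.

(* Conventions: indices 1..n of the paper are 'I_n = {0,..,n-1}.
   The ambient field is the fraction field of Z[x_0,...,x_{n-1}, q]:
   variable index (widen i) is x_i, variable index ord_max is q. *)

Notation "x %:F" := (@FracField.tofrac _ x) : ring_scope.

Definition ratfun (n : nat) := {fraction {mpoly int[n.+1]}}.

Definition xvar (n : nat) (i : 'I_n) : ratfun n :=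
  ('X_(widen_ord (leqnSn n) i) : {mpoly int[n.+1]})%:F.

Definition qvar (n : nat) : ratfun n := ('X_(@ord_max n) : {mpoly int[n.+1]})%:F.

Definition mdegx (k : nat) (v : 'I_k) (p : {mpoly int[k]}) : nat :=
  \max_(m <- msupp p) m v.

(* "f has degree d in the variable v": f = p/q with p, q nonzero polynomials
   and d = deg_v p - deg_v q (well defined for nonzero f). *)
Definition rdeg_is (n : nat) (v : 'I_n.+1) (f : ratfun n) (d : int) : Prop :=
  exists p q : {mpoly int[n.+1]}, [/\ p != 0, q != 0,
    f = p%:F / q%:F & d = (mdegx v p)%:Z - (mdegx v q)%:Z].

Definition tournament (n : nat) (Q : {set 'I_n * 'I_n}) (u w : 'I_n) : bool :=
  ((u < w)%N && ((u, w) \notin Q)) || ((w < u)%N && ((w, u) \in Q)).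

Definition Afun (n : nat) (Q : {set 'I_n * 'I_n}) (X : 'I_n -> ratfun n) : ratfun n :=
  \prod_(p in Q) (X p.2 / X p.1).

Definition Bfun (n : nat) (a : 'I_n -> int) (X : 'I_n -> ratfun n) : ratfun n :=
  \prod_(i : 'I_n) \prod_(j : 'I_n | (i < j)%N) (1 - qvar n ^ (a j) * X j / X i).

(* E_{r,k}: replace x_{r_i} by x_{r_s} q^{k_s - k_i}; here r, k are indexed by
   'I_s.+1 so that the paper's r_s is r ord_max. *)
Definition Esubst (n s : nat) (r : 'I_s.+1 -> 'I_n) (k : 'I_s.+1 -> int)
  (m : 'I_n) : ratfun n :=
  match [pick i | r i == m] with
  | Some i => xvar (r ord_max) * qvar n ^ (k ord_max - k i)
  | None => xvar m
  end.

(* Each substituted variable E(x_m) is a Laurent monomial whose degree in x_{r_s} is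
   [m \in R]. Since the partial degree is additive on products of nonzero polynomials,
   A has degree sum_{(i,j) in Q} ([j \in R] - [i \in R]) and the factor
   1 - q^{a_j} E(x_j)/E(x_i) of B has degree max(0, [j \in R] - [i \in R]). The pair
   i < j then contributes -1 to deg A - deg B when the tournament edge between i and j
   enters R from outside, and 0 otherwise: the degree is minus the number of such edges. *)

From HB Require Import structures.
From mathcomp Require Import all_boot all_order all_algebra.
From mathcomp Require Import fraction.
From mathcomp Require Import mpoly.
From mathcomp Require Import zify ring.
Set Implicit Arguments. Unset Strict Implicit. Unset Printing Implicit Defensive.
Import Order.TTheory GRing.Theory Num.Theory.
Local Open Scope ring_scope.

Lemma bigmax_seq_attained (T : eqType) (s : seq T) (F : T -> nat) : s != [::] ->
  exists2 x, x \in s & (\max_(y <- s) F y)%N = F x.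
Proof.
elim: s => // a [|b s] IH _; first by exists a; rewrite ?mem_head // big_seq1.
rewrite big_cons; have [x xs ->] := IH isT.
case: (leqP (F a) (F x)) => _; first by exists x; rewrite // inE xs orbT.
by exists a; rewrite ?mem_head.
Qed.

Lemma mpolyX_neq0 (R : nzRingType) (k : nat) (m : 'X_{1..k}) : 'X_[m] != 0 :> {mpoly R[k]}.
Proof. by rewrite -msupp_eq0 msuppX. Qed.

Lemma mpolyX_inj (R : nzRingType) (k : nat) :
  injective (fun m : 'X_{1..k} => 'X_[m] : {mpoly R[k]}).
Proof. by move=> m1 m2 /(congr1 (@msupp k R)); rewrite !msuppX => -[]. Qed.

Section PartialDegree.
Variables (k : nat) (v : 'I_k).
Implicit Types (p q : {mpoly int[k]}) (m : 'X_{1..k}).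

Lemma mdegx_msupp p m : m \in msupp p -> (m v <= mdegx v p)%N.
Proof. by move=> mp; rewrite /mdegx (bigD1_seq m) ?msupp_uniq //= leq_maxl. Qed.

Lemma mdegx_leP p d : reflect (forall m, m \in msupp p -> m v <= d)%N (mdegx v p <= d)%N.
Proof.
apply: (iffP (bigmax_leqP_seq _ _ _ _)) => le_d m mp; first exact: le_d.
by move=> _; apply: le_d.
Qed.

Lemma mcoeff_mdegx_lt p m : (mdegx v p < m v)%N -> p@_m = 0.
Proof.
by move=> lt_pm; apply/memN_msupp_eq0/negP => /mdegx_msupp; rewrite leqNgt lt_pm.
Qed.

Lemma mdegx_attained p : p != 0 -> exists2 m, m \in msupp p & m v = mdegx v p.
Proof.
by rewrite /mdegx -msupp_eq0 => /(bigmax_seq_attained (fun m => m v)) [m mp ->]; exists m.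
Qed.

Lemma mdegxX m : mdegx v 'X_[m] = m v.
Proof. by rewrite /mdegx msuppX big_seq1. Qed.

Lemma mdegx_mpolyXB m1 m2 : m1 != m2 ->
  mdegx v ('X_[m1] - 'X_[m2]) = maxn (m1 v) (m2 v).
Proof.
move=> m12; apply/eqP; rewrite eqn_leq; apply/andP; split.
  apply/mdegx_leP => m /msuppD_le; rewrite mem_cat (perm_mem (msuppN _)) !msuppX !inE.
  by case/orP => /eqP ->; rewrite ?leq_maxl ?leq_maxr.
rewrite geq_max; apply/andP; split; apply: mdegx_msupp;
  rewrite mcoeff_msupp mcoeffB !mcoeffX eqxx.
- by rewrite [m2 == m1]eq_sym (negbTE m12) subr0 oner_eq0.
- by rewrite (negbTE m12) sub0r oppr_eq0 oner_eq0.
Qed.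

Definition mtopx p d : {mpoly int[k]} := \sum_(m <- msupp p | m v == d) p@_m *: 'X_[m].

Lemma mcoeff_mtopx p d m : (mtopx p d)@_m = if m v == d then p@_m else 0.
Proof.
rewrite /mtopx raddf_sum /=; under eq_bigr do rewrite mcoeffZ mcoeffX.
case: (boolP (m \in msupp p)) => mp.
  rewrite big_mkcond (bigD1_seq m) ?msupp_uniq //= eqxx mulr1 big1 ?addr0 //.
  by move=> m' /negbTE ->; rewrite mulr0 if_same.
rewrite (memN_msupp_eq0 mp) if_same big_seq_cond big1 // => m' /andP[m'p _].
by rewrite (_ : m' == m = false) ?mulr0 //; apply: contraNF mp => /eqP <-.
Qed.

Lemma msupp_mtopx p d m : m \in msupp (mtopx p d) -> m v = d.
Proof. by rewrite mcoeff_msupp mcoeff_mtopx; case: (m v =P d); rewrite ?eqxx. Qed.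

Lemma mtopx_neq0 p : p != 0 -> mtopx p (mdegx v p) != 0.
Proof.
move=> /mdegx_attained [m mp mv]; apply/eqP => /(congr1 (mcoeff m)).
by rewrite mcoeff_mtopx mv eqxx mcoeff0 => /eqP; rewrite mcoeff_eq0 mp.
Qed.

Lemma mdegxM_le p q : (mdegx v (p * q) <= mdegx v p + mdegx v q)%N.
Proof.
apply/mdegx_leP => m /msuppM_le /allpairsP [[m1 m2] /= [m1p m2q ->]].
by rewrite mnmDE leq_add ?mdegx_msupp.
Qed.

Lemma mcoeffM_mtopx p q m : m v = (mdegx v p + mdegx v q)%N ->
  (p * q)@_m = (mtopx p (mdegx v p) * mtopx q (mdegx v q))@_m.
Proof.
move=> mv; rewrite !mcoeffM; apply: eq_bigr => -[m1 m2] /= /eqP m12.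
have {m12}mv12 : (m1 v + m2 v = mdegx v p + mdegx v q)%N.
  by rewrite -mnmDE -(congr1 (fun m' : 'X_{1..k} => m' v) m12).
rewrite !mcoeff_mtopx; case: (ltngtP (m1 v) (mdegx v p)) => [lt1|gt1|eq1].
- by rewrite (@mcoeff_mdegx_lt q) ?mulr0 //; lia.
- by rewrite mcoeff_mdegx_lt ?mul0r.
- by rewrite (_ : m2 v = mdegx v q) ?eqxx //; lia.
Qed.

Lemma mdegxM p q : p != 0 -> q != 0 -> mdegx v (p * q) = (mdegx v p + mdegx v q)%N.
Proof.
move=> p0 q0; apply/eqP; rewrite eqn_leq mdegxM_le /=.
have [m /[dup] mt /msuppM_le /allpairsP [[m1 m2] /= [m1p m2q mE]] _] :=
  mdegx_attained (mulf_neq0 (mtopx_neq0 p0) (mtopx_neq0 q0)).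
have mv : m v = (mdegx v p + mdegx v q)%N.
  by rewrite mE mnmDE (msupp_mtopx m1p) (msupp_mtopx m2q).
by rewrite -mv mdegx_msupp // mcoeff_msupp mcoeffM_mtopx // -mcoeff_msupp.
Qed.

End PartialDegree.

Section RationalDegree.
Variables (n : nat) (v : 'I_n.+1).
Implicit Types (f g : ratfun n) (d : int).

Lemma rdeg_is1 : rdeg_is v 1 0.
Proof.
exists 1, 1; rewrite oner_neq0 tofrac1 divr1; split=> //.
by rewrite -mpolyX0 mdegxX mnm0E subrr.
Qed.

Lemma rdeg_isM f g d1 d2 : rdeg_is v f d1 -> rdeg_is v g d2 -> rdeg_is v (f * g) (d1 + d2).
Proof.
move=> [p1 [q1 [p10 q10 -> ->]]] [p2 [q2 [p20 q20 -> ->]]].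
exists (p1 * p2), (q1 * q2); rewrite !mulf_neq0 // !tofracM mulf_div; split=> //.
by rewrite !mdegxM // !PoszD; ring.
Qed.

Lemma rdeg_isV f d : rdeg_is v f d -> rdeg_is v f^-1 (- d).
Proof. by move=> [p [q [p0 q0 -> ->]]]; exists q, p; rewrite invf_div opprB. Qed.

Lemma rdeg_is_prod (I : finType) (P : pred I) (F : I -> ratfun n) (D : I -> int) :
  (forall i, P i -> rdeg_is v (F i) (D i)) ->
  rdeg_is v (\prod_(i | P i) F i) (\sum_(i | P i) D i).
Proof.
move=> FD; apply: (big_ind2 (rdeg_is v)) => //; first exact: rdeg_is1.
by move=> f d1 g d2; apply: rdeg_isM.
Qed.

Definition lmonom_deg f d : Prop := exists m1 m2 : 'X_{1..n.+1},
  f = ('X_[m1] : {mpoly int[n.+1]})%:F / ('X_[m2] : {mpoly int[n.+1]})%:F /\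
  d = (m1 v)%:Z - (m2 v)%:Z.

Lemma lmonom_deg1 : lmonom_deg 1 0.
Proof. by exists 0%MM, 0%MM; rewrite mpolyX0 tofrac1 divr1 subrr. Qed.

Lemma lmonom_degM f g d1 d2 :
  lmonom_deg f d1 -> lmonom_deg g d2 -> lmonom_deg (f * g) (d1 + d2).
Proof.
move=> [m1 [m2 [-> ->]]] [m3 [m4 [-> ->]]].
exists (m1 + m3)%MM, (m2 + m4)%MM; rewrite !mpolyXD !tofracM mulf_div !mnmDE.
by split=> //; rewrite !PoszD; ring.
Qed.

Lemma lmonom_degV f d : lmonom_deg f d -> lmonom_deg f^-1 (- d).
Proof. by move=> [m1 [m2 [-> ->]]]; exists m2, m1; rewrite invf_div opprB. Qed.

Lemma lmonom_degX (i : 'I_n.+1) :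
  lmonom_deg ('X_i : {mpoly int[n.+1]})%:F (i == v)%:R.
Proof.
exists U_(i)%MM, 0%MM; rewrite mpolyX0 tofrac1 divr1 mnm1E mnm0E subr0.
by case: (i == v).
Qed.

Lemma lmonom_degXz f d (z : int) : lmonom_deg f d -> lmonom_deg (f ^ z) (d * z).
Proof.
have lmonom_degXn N : lmonom_deg f d -> lmonom_deg (f ^+ N) (d * N%:Z).
  move=> fd; elim: N => [|N IHN]; first by rewrite expr0 mulr0; exact: lmonom_deg1.
  by rewrite exprS intS mulrDr mulr1; apply: lmonom_degM.
case: z => N fd; first exact: lmonom_degXn.
by rewrite NegzE mulrN -exprnN; apply/lmonom_degV/lmonom_degXn.
Qed.

Lemma lmonom_deg_prod (I : finType) (P : pred I) (F : I -> ratfun n) (D : I -> int) :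
  (forall i, P i -> lmonom_deg (F i) (D i)) ->
  lmonom_deg (\prod_(i | P i) F i) (\sum_(i | P i) D i).
Proof.
move=> FD; apply: (big_ind2 lmonom_deg) => //; first exact: lmonom_deg1.
by move=> f d1 g d2; apply: lmonom_degM.
Qed.

Lemma lmonom_rdeg f d : lmonom_deg f d -> rdeg_is v f d.
Proof.
move=> [m1 [m2 [-> ->]]]; exists 'X_[m1], 'X_[m2].
by rewrite !mpolyX_neq0 !mdegxX.
Qed.

(* [1 - x^m1 / x^m2 = (x^m2 - x^m1) / x^m2]: the numerator has [v]-degree the larger one. *)
Lemma rdeg_is_1_sub_lmonom f d : lmonom_deg f d -> 1 - f != 0 ->
  rdeg_is v (1 - f) (Num.max 0 d).
Proof.
move=> [m1 [m2 [-> ->]]] f1.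
have X2 : ('X_[m2] : {mpoly int[n.+1]})%:F != 0 by rewrite tofrac_eq0 mpolyX_neq0.
have m21 : m2 != m1 by apply: contraNneq f1 => <-; rewrite divff // subrr.
exists ('X_[m2] - 'X_[m1]), 'X_[m2]; split.
- by rewrite subr_eq0; apply: contra m21 => /eqP /mpolyX_inj ->.
- exact: mpolyX_neq0.
- by rewrite tofracB mulrBl divff.
rewrite mdegx_mpolyXB // mdegxX.
case: (leqP (m2 v) (m1 v)) => m12; first by apply/max_idPr; rewrite subr_ge0 lez_nat.
by rewrite subrr; apply/max_idPl; rewrite subr_le0 lez_nat ltnW.
Qed.

End RationalDegree.

Section SubstitutedFactors.
Variables (n : nat) (v : 'I_n.+1) (X : 'I_n -> ratfun n) (e : 'I_n -> int).
Hypothesis lmonom_deg_X : forall m, lmonom_deg v (X m) (e m).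

Lemma lmonom_deg_Afun (Q : {set 'I_n * 'I_n}) :
  lmonom_deg v (Afun Q X) (\sum_(p in Q) (e p.2 - e p.1)).
Proof.
by apply: lmonom_deg_prod => p _; apply: lmonom_degM; last apply: lmonom_degV.
Qed.

Lemma rdeg_is_Bfun (a : 'I_n -> int) : v != ord_max -> Bfun a X != 0 ->
  rdeg_is v (Bfun a X) (\sum_(i : 'I_n) \sum_(j : 'I_n | (i < j)%N) Num.max 0 (e j - e i)).
Proof.
move=> vq /prodf_neq0 B0; apply: rdeg_is_prod => i _.
apply: rdeg_is_prod => j ij; apply: rdeg_is_1_sub_lmonom; last first.
  by move/prodf_neq0: (B0 i isT); apply.
have := lmonom_degM (lmonom_degM (lmonom_degXz (a j) (lmonom_degX v ord_max))
  (lmonom_deg_X j)) (lmonom_degV (lmonom_deg_X i)).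
by rewrite eq_sym (negbTE vq) mul0r add0r.
Qed.

End SubstitutedFactors.

Lemma widen_ord_max_neq (n : nat) (i : 'I_n) : widen_ord (leqnSn n) i != ord_max.
Proof. by rewrite -val_eqE /= neq_ltn ltn_ord. Qed.

Lemma lmonom_deg_Esubst (n s : nat) (r : 'I_s.+1 -> 'I_n) (k : 'I_s.+1 -> int) (m : 'I_n) :
  lmonom_deg (widen_ord (leqnSn n) (r ord_max)) (Esubst r k m)
    (m \in [set r i | i : 'I_s.+1])%:R.
Proof.
set w := widen_ord (leqnSn n) (r ord_max).
rewrite /Esubst /xvar /qvar; case: pickP => [i /eqP <- | rm].
  have := lmonom_degM (lmonom_degX w w)
    (lmonom_degXz (k ord_max - k i) (lmonom_degX w ord_max)).
  by rewrite eqxx eq_sym (negbTE (widen_ord_max_neq _)) mul0r addr0 imset_f.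
have /negPf -> : m \notin [set r i | i : 'I_s.+1].
  by apply/imsetP => -[i _ mE]; have := rm i; rewrite mE eqxx.
have /negPf mw : widen_ord (leqnSn n) m != w by rewrite -val_eqE /= val_eqE eq_sym rm.
by have := lmonom_degX w (widen_ord (leqnSn n) m); rewrite mw.
Qed.

Section CutCount.
Variables (n : nat) (Q : {set 'I_n * 'I_n}) (R : {set 'I_n}).
Hypothesis Q_upper : forall p, p \in Q -> (p.1 < p.2)%N.

(* For [i < j]: the tournament edge between [i] and [j] enters [R]. *)
Definition cut_edge_inward (i j : 'I_n) : bool :=
  [&& i \in R, j \notin R & (i, j) \in Q] || [&& i \notin R, j \in R & (i, j) \notin Q].

Definition cut_inward_count : nat :=
  \sum_(p : 'I_n * 'I_n | (p.1 < p.2)%N) cut_edge_inward p.1 p.2.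

Lemma cut_degree (e := fun m : 'I_n => (m \in R)%:R : int) :
  \sum_(p in Q) (e p.2 - e p.1) -
    \sum_(i : 'I_n) \sum_(j : 'I_n | (i < j)%N) Num.max 0 (e j - e i) =
  - cut_inward_count%:R.
Proof.
rewrite pair_big_dep /= big_mkcond /=.
rewrite (eq_bigr (fun p : 'I_n * 'I_n =>
  if (p.1 < p.2)%N then if p \in Q then e p.2 - e p.1 else 0 else 0)).
  rewrite -big_mkcond /cut_inward_count natr_sum -sumrB -sumrN.
  apply: eq_bigr => -[i j] _ /=; rewrite /e /cut_edge_inward.
  by case: (i \in R); case: (j \in R); case: ((i, j) \in Q).
by move=> p _; case: ifP => pQ; rewrite ?(Q_upper pQ) ?if_same.
Qed.

Lemma cut_inward_count_eq0P :
  reflect (forall rr m, rr \in R -> m \notin R -> tournament Q rr m)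
          (cut_inward_count == 0)%N.
Proof.
rewrite /cut_inward_count sum_nat_eq0; apply: (iffP forall_inP) => [none rr m rrR mR|out].
  rewrite /tournament /cut_edge_inward in none *.
  case: (ltngtP rr m) => [rm|mr|/val_inj rm]; last by rewrite -rm rrR in mR.
  - by have := none (rr, m) rm; rewrite /= rrR mR; case: ((rr, m) \in Q).
  - by have := none (m, rr) mr; rewrite /= rrR (negPf mR); case: ((m, rr) \in Q).
move=> [i j] /= ij; rewrite /cut_edge_inward /tournament in out *.
have ji : (j < i)%N = false by rewrite ltnNge ltnW.
have [iR|iR] := boolP (i \in R); have [jR|jR] := boolP (j \in R) => //=.
- by have := out i j iR jR; rewrite ij ji /=; case: ((i, j) \in Q).
- by have := out j i jR iR; rewrite ij ji /=; case: ((i, j) \in Q).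
Qed.

End CutCount.

Theorem mainTheorem8 (n : nat) (hn : (1 <= n)%N) (a : 'I_n -> int)
  (Q : {set 'I_n * 'I_n}) (hQ : forall p, p \in Q -> (p.1 < p.2)%N)
  (s : nat) (r : 'I_s.+1 -> 'I_n) (hr : forall i j : 'I_s.+1, (i < j)%N -> (r i < r j)%N)
  (k : 'I_s.+1 -> int)
  (hB : Bfun a (Esubst r k) != 0) :
  let R := [set r i | i : 'I_s.+1] in
  let F := Afun Q (Esubst r k) / Bfun a (Esubst r k) in
  exists d : int,
    rdeg_is (widen_ord (leqnSn n) (r ord_max)) F d /\
    (d = 0 <-> (forall rr m : 'I_n, rr \in R -> m \notin R -> tournament Q rr m)) /\
    (~ (forall rr m : 'I_n, rr \in R -> m \notin R -> tournament Q rr m) -> d < 0).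
Proof.
move=> R F; exists (- (cut_inward_count Q R)%:R); split.
  rewrite -cut_degree //; have Xdeg := lmonom_deg_Esubst r k.
  exact: rdeg_isM (lmonom_rdeg (lmonom_deg_Afun Xdeg Q))
    (rdeg_isV (rdeg_is_Bfun Xdeg (widen_ord_max_neq _) hB)).
split.
  split=> [/eqP | /cut_inward_count_eq0P/eqP ->]; last by rewrite oppr0.
  by rewrite oppr_eq0 pnatr_eq0 => /cut_inward_count_eq0P.
by move=> cut_in; rewrite oppr_lt0 ltr0n lt0n; apply/negP => /cut_inward_count_eq0P.
Qed.
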